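(* Let $m,n,k$ be positive integers, $A\in\mathbb{R}^{m\times n}$ satisfying the $(2k+1)$-RIP, $x^*\in\mathbb{R}^n$ with support $S^*$, $|S^*|\le k$, $e\in\mathbb{R}^m$, $y=Ax^*+e$. For every initialization $\mathcal{X}^0$, every $\eta>0$ and every $t\in\mathbb{N}$, the SEA iterates satisfy $$\|(x^t-x^* )_{S^t}\|_2\le\frac{\delta_{2k}}{1-\delta_k}\frac{\|u^t\|_2}{\eta}+\frac{\sqrt{1+\delta_k}}{1-\delta_k}\|e\|_2.$$
   Context: For $l\in\{1,\dots,n\}$, the restricted isometry constant $\delta_l$ of $A$ is the smallest $\delta\ge0$ such that $(1-\delta)\|x\|_2^2\le\|Ax\|_2^2\le(1+\delta)\|x\|_2^2$ for all $x$ with at most $l$ nonzero entries; $A$ satisfies the $l$-RIP if $\delta_l<1$. $S^*=\{i:x^*_i\neq0\}$. For $v\in\mathbb{R}^n$, $\mathrm{largest}_k(v)$ is the set of indices of the $k$ entries of $v$ with largest absolute value (ties broken by selecting the highest indices). For $S\subseteq\{1,\dots,n\}$, $A_S$ is the submatrix of columns indexed by $S$, $v_S$ the restriction of a vector to $S$, $A_S^\dagger$ the Moore–Penrose pseudoinverse of $A_S$. SEA with initialization $\mathcal{X}^0$ and step size $\eta$ generates, for $t=0,1,2,\dots$: $S^t=\mathrm{largest}_k(\mathcal{X}^t)$; $x^t_i=0$ for $i\notin S^t$ and $x^t_{S^t}=A_{S^t}^\dagger y$; $\mathcal{X}^{t+1}=\mathcal{X}^t-\eta A^T(Ax^t-y)$.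 The oracle direction is $u^t_i=-\eta x^*_i$ if $i\in S^*\setminus S^t$ and $u^t_i=0$ otherwise. *)

From HB Require Import structures.
From mathcomp Require Import all_boot all_order all_algebra.
From mathcomp Require Import classical_sets reals.
Set Implicit Arguments. Unset Strict Implicit. Unset Printing Implicit Defensive.
Import Order.TTheory GRing.Theory Num.Theory.
Local Open Scope ring_scope.
Local Open Scope classical_set_scope.

Section SEA.
Variable R : realType.

Definition norm2 {p : nat} (v : 'cV[R]_p) : R := Num.sqrt (\sum_(i < p) v i 0 ^+ 2).

Definition supp {p : nat} (v : 'cV[R]_p) : {set 'I_p} := [set i | v i 0 != 0].
Definition sparse {p : nat} (l : nat) (v : 'cV[R]_p) : Prop := (#|supp v| <= l)%N.

(* restricted isometry constant delta_l: smallest delta >= 0 with the RIP inequalities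
   for all l-sparse x (the set is closed and nonempty, so inf = min) *)
Definition rip_const {m n : nat} (A : 'M[R]_(m, n)) (l : nat) : R :=
  inf [set d : R | 0 <= d /\ forall x : 'cV[R]_n, sparse l x ->
        (1 - d) * norm2 x ^+ 2 <= norm2 (A *m x) ^+ 2 /\
        norm2 (A *m x) ^+ 2 <= (1 + d) * norm2 x ^+ 2].

(* Moore--Penrose pseudoinverse: the (unique) matrix satisfying the Penrose equations *)
Definition mp_pinv {p q : nat} (M : 'M[R]_(p, q)) : 'M[R]_(q, p) :=
  xget 0 [set B : 'M[R]_(q, p) | [/\ M *m B *m M = M, B *m M *m B = B,
                                   (M *m B)^T = M *m B & (B *m M)^T = B *m M]].

(* submatrix of columns indexed by S (in increasing order), restriction of a vector to S,
   and the embedding of R^S back into R^n (zero outside S) *)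
Definition colsS {m n : nat} (S : {set 'I_n}) (A : 'M[R]_(m, n)) : 'M[R]_(m, #|S|) :=
  colsub (enum_val (A := S)) A.
Definition restr {n : nat} (S : {set 'I_n}) (v : 'cV[R]_n) : 'cV[R]_#|S| :=
  rowsub (enum_val (A := S)) v.
Definition embedS {n : nat} (S : {set 'I_n}) : 'M[R]_(n, #|S|) :=
  \matrix_(i, j) (i == enum_val (A := S) j)%:R.

(* largest_k v: indices of the k largest |v_i|, ties broken by selecting highest indices.
   j "beats" i when |v_j| > |v_i|, or |v_j| = |v_i| and j > i; i is selected iff
   fewer than k indices beat it. *)
Definition beats {n : nat} (v : 'cV[R]_n) (j i : 'I_n) : bool :=
  (`|v i 0| < `|v j 0|) || ((`|v j 0| == `|v i 0|) && (i < j)%N).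
Definition largest {n : nat} (k : nat) (v : 'cV[R]_n) : {set 'I_n} :=
  [set i | (#|[set j | beats v j i]| < k)%N].

Definition sea_x {m n : nat} (A : 'M[R]_(m, n)) (y : 'cV[R]_m) (S : {set 'I_n}) : 'cV[R]_n :=
  embedS S *m (mp_pinv (colsS S A) *m y).

Fixpoint sea_X {m n : nat} (A : 'M[R]_(m, n)) (y : 'cV[R]_m) (k : nat) (eta : R)
  (X0 : 'cV[R]_n) (t : nat) : 'cV[R]_n :=
  match t with
  | 0 => X0
  | t'.+1 => let X := sea_X A y k eta X0 t' in
             X - eta *: (A^T *m (A *m sea_x A y (largest k X) - y))
  end.

Definition sea_S {m n : nat} A y k eta X0 t : {set 'I_n} :=
  largest k (@sea_X m n A y k eta X0 t).
Definition sea_xt {m n : nat} A y k eta X0 t : 'cV[R]_n :=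
  sea_x A y (@sea_S m n A y k eta X0 t).

Definition oracle {m n : nat} A y k eta X0 (xs : 'cV[R]_n) t : 'cV[R]_n :=
  \col_i (if (i \in supp xs) && (i \notin @sea_S m n A y k eta X0 t)
          then - (eta * xs i 0) else 0).

End SEA.

(* On its support [S = S^t], the iterate [x^t] is the least-squares fit of [y] by
   the columns of [A_S], so the residual [A x^t - y] is orthogonal to them.  Split
   [x^t - xs = a - r] with [a] supported on [S], so that [|a| = |restr S (x^t - xs)|],
   and [r = offS S xs = - u^t / eta]; orthogonality gives
   [|A a|^2 = <A a, A r> + <A a, e>].  The lower RIP bound on [a], the bound
   [<A a, A r> <= delta_2k |a| |r|] for disjointly supported vectors with [2k]
   nonzero entries in total, and Cauchy-Schwarz with the upper RIP bound
   [|A a| <= sqrt (1 + delta_k) |a|] give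
   [(1 - delta_k) |a|^2 <= |a| (delta_2k |r| + sqrt (1 + delta_k) |e|)]. *)

From HB Require Import structures.
From mathcomp Require Import all_boot all_order all_algebra.
From mathcomp Require Import classical_sets reals.
From mathcomp Require Import ring lra.
Import Order.TTheory GRing.Theory Num.Theory.

Set Implicit Arguments.
Unset Strict Implicit.
Unset Printing Implicit Defensive.

Local Open Scope ring_scope.

Section ScalarBounds.
Variable R : realFieldType.

Lemma le_mul_of_scaled_bound (X a b : R) : 0 <= a -> 0 <= b ->
  (forall mu, 0 < mu -> 2 * mu * X <= mu ^+ 2 * a ^+ 2 + b ^+ 2) -> X <= a * b.
Proof.
move=> a0 b0 bound; rewrite leNgt; apply/negP => abX.
have X0 : 0 < X by apply: le_lt_trans abX; rewrite mulr_ge0.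
have [a_gt0 | a_le0] := ltrP 0 a.
  set mu := X / a ^+ 2.
  have mu0 : 0 < mu by rewrite divr_gt0 ?exprn_gt0.
  have mu_a : mu * a ^+ 2 = X by rewrite divfK ?expf_neq0 ?gt_eqF.
  have muX : mu * X <= b ^+ 2.
    by have := bound _ mu0; rewrite (expr2 mu) -[mu * mu * _]mulrA mu_a; lra.
  have : X * X <= a ^+ 2 * b ^+ 2 by rewrite -{1}mu_a mulrAC mulrC ler_wpM2l ?sqr_ge0.
  by rewrite -exprMn expr2 leNgt ltr_pM ?mulr_ge0.
have mu0 : 0 < b ^+ 2 + 1 by rewrite ltr_wpDl ?sqr_ge0.
have := bound _ (divr_gt0 mu0 X0).
have -> : 2 * ((b ^+ 2 + 1) / X) * X = 2 * (b ^+ 2 + 1) by field; rewrite gt_eqF.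
have -> : a = 0 by apply/le_anti; rewrite a_le0 a0.
lra.
Qed.

Lemma le_of_le_add_mul (a b c : R) :
  0 <= c -> (forall eps, 0 < eps -> a <= b + eps * c) -> a <= b.
Proof.
move=> c0 le_ab; apply/ler_addgt0Pr => e e0.
have q0 : 0 < e / (c + 1) by rewrite divr_gt0 // ltr_wpDl.
apply: (le_trans (le_ab _ q0)); rewrite lerD2l.
by rewrite mulrAC ler_pdivrMr ?ltr_wpDl //; nra.
Qed.

Lemma le_of_mul_sq_le (c N T : R) :
  0 <= N -> 0 <= T -> c * N ^+ 2 <= N * T -> c * N <= T.
Proof.
move=> N0 T0; have [N_gt0 | N_le0] := ltrP 0 N; first by rewrite expr2; nra.
have -> : N = 0 by apply/le_anti; rewrite N_le0 N0.
by rewrite mulr0.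
Qed.

End ScalarBounds.

Section Euclidean.
Variable R : realType.
Implicit Types (p q : nat).

Definition dot p (a b : 'cV[R]_p) : R := \sum_(i < p) a i 0 * b i 0.

Lemma dotC p (a b : 'cV[R]_p) : dot a b = dot b a.
Proof. by apply: eq_bigr => i _; rewrite mulrC. Qed.

Lemma dot0r p (a : 'cV[R]_p) : dot a 0 = 0.
Proof. by rewrite /dot big1 // => i _; rewrite mxE mulr0. Qed.

Lemma dotDr p (a b c : 'cV[R]_p) : dot a (b + c) = dot a b + dot a c.
Proof. by rewrite /dot -big_split; apply: eq_bigr => i _; rewrite mxE mulrDr. Qed.

Lemma dotBr p (a b c : 'cV[R]_p) : dot a (b - c) = dot a b - dot a c.
Proof. by rewrite /dot -sumrB; apply: eq_bigr => i _; rewrite !mxE mulrBr. Qed.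

Lemma dot_lincomb2 p (c d : R) (a b : 'cV[R]_p) :
  dot (c *: a + d *: b) (c *: a + d *: b)
  = c ^+ 2 * dot a a + 2 * c * d * dot a b + d ^+ 2 * dot b b.
Proof.
rewrite /dot !mulr_sumr -!big_split; apply: eq_bigr => i _; rewrite !mxE /=; ring.
Qed.

Lemma dot_mulmx p q (M : 'M[R]_(p, q)) a b : dot a (M *m b) = dot (M^T *m a) b.
Proof.
rewrite /dot; under eq_bigr => i _ do rewrite mxE mulr_sumr.
rewrite exchange_big; apply: eq_bigr => j _; rewrite mxE mulr_suml.
by apply: eq_bigr => i _; rewrite mxE; ring.
Qed.

Lemma dot_ge0 p (a : 'cV[R]_p) : 0 <= dot a a.
Proof. by apply: sumr_ge0 => i _; rewrite -expr2 sqr_ge0. Qed.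

Lemma norm2_ge0 p (a : 'cV[R]_p) : 0 <= norm2 a.
Proof. exact: sqrtr_ge0. Qed.

Lemma norm2_sq p (a : 'cV[R]_p) : norm2 a ^+ 2 = dot a a.
Proof.
rewrite /norm2 sqr_sqrtr; last by apply: sumr_ge0 => i _; rewrite sqr_ge0.
by apply: eq_bigr => i _; rewrite expr2.
Qed.

Lemma norm2_eq0 p (a : 'cV[R]_p) : (norm2 a == 0) = (a == 0).
Proof.
have sq_ge0 (i : 'I_p) : true -> 0 <= a i 0 ^+ 2 by rewrite sqr_ge0.
rewrite sqrtr_eq0; apply/idP/eqP => [le0|->]; last first.
  by rewrite big1 // => i _; rewrite mxE expr0n.
have /psumr_eq0P a0 : \sum_(i < p) a i 0 ^+ 2 = 0.
  by apply/le_anti; rewrite le0 sumr_ge0.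
apply/matrixP => i j; rewrite (ord1 j) mxE.
by apply/eqP; rewrite -sqrf_eq0 a0.
Qed.

Lemma dot_self_eq0 p (a : 'cV[R]_p) : (dot a a == 0) = (a == 0).
Proof. by rewrite -norm2_sq sqrf_eq0 norm2_eq0. Qed.

Lemma norm2Z p (c : R) (a : 'cV[R]_p) : norm2 (c *: a) = `|c| * norm2 a.
Proof.
rewrite /norm2 -sqrtr_sqr -sqrtrM ?sqr_ge0 // mulr_sumr; congr Num.sqrt.
by apply: eq_bigr => i _; rewrite mxE exprMn.
Qed.

Lemma cauchy_schwarz p (a b : 'cV[R]_p) : `|dot a b| <= norm2 a * norm2 b.
Proof.
have one_sided (c : R) : c ^+ 2 = 1 -> c * dot a b <= norm2 a * norm2 b.
  move=> c2; apply: le_mul_of_scaled_bound; rewrite ?norm2_ge0 // => mu _.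
  have := dot_ge0 (mu *: a + (- c) *: b).
  rewrite dot_lincomb2 !norm2_sq sqrrN c2; lra.
rewrite ler_norml; apply/andP; split.
  by rewrite lerNl -mulN1r one_sided // sqrrN expr1n.
by rewrite -[dot a b]mul1r one_sided // expr1n.
Qed.

End Euclidean.

Section RestrictedIsometry.
Variables (R : realType) (m n : nat) (A : 'M[R]_(m, n)).
Local Open Scope classical_set_scope.

Definition rip_set l : set R := [set d | 0 <= d /\ forall x : 'cV[R]_n, sparse l x ->
  (1 - d) * norm2 x ^+ 2 <= norm2 (A *m x) ^+ 2 /\
  norm2 (A *m x) ^+ 2 <= (1 + d) * norm2 x ^+ 2].

Lemma norm2_mulmx_bounded :
  exists2 C : R, 0 <= C & forall x, norm2 (A *m x) ^+ 2 <= C * norm2 x ^+ 2.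
Proof.
pose r i : 'cV[R]_n := (row i A)^T.
exists (\sum_i norm2 (r i) ^+ 2); first by apply: sumr_ge0 => i _; rewrite sqr_ge0.
move=> x; rewrite mulr_suml norm2_sq; apply: ler_sum => i _.
have -> : (A *m x) i 0 = dot (r i) x by rewrite mxE; apply: eq_bigr => j _; rewrite !mxE.
rewrite -exprMn -expr2 -real_normK ?num_real //.
by rewrite lerXn2r ?nnegrE ?normr_ge0 ?mulr_ge0 ?norm2_ge0 ?cauchy_schwarz.
Qed.

Lemma rip_set0 l : rip_set l !=set0.
Proof.
have [C C0 bounded] := norm2_mulmx_bounded.
exists (C + 1); split=> [|x _]; first lra.
have := bounded x; have := sqr_ge0 (norm2 x); have := sqr_ge0 (norm2 (A *m x)).
split; nra.
Qed.

Lemma rip_const_ge0 l : 0 <= rip_const A l.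
Proof. by apply: lb_le_inf; [exact: rip_set0 | move=> d []]. Qed.

Lemma rip_constP l x : sparse l x ->
  (1 - rip_const A l) * norm2 x ^+ 2 <= norm2 (A *m x) ^+ 2 /\
  norm2 (A *m x) ^+ 2 <= (1 + rip_const A l) * norm2 x ^+ 2.
Proof.
move=> sx; have N0 := sqr_ge0 (norm2 x).
have hinf : has_inf (rip_set l) by split; [exact: rip_set0 | exists 0 => d []].
split; apply: (le_of_le_add_mul N0) => eps /inf_adherent /(_ hinf)[d [_ rip_d] lt_d];
  have [lo hi] := rip_d x sx; rewrite /rip_const -/(rip_set l); nra.
Qed.

Lemma le_rip_const l l' : (l <= l')%N -> rip_const A l <= rip_const A l'.
Proof.
move=> ll'; apply: lb_le_inf; first exact: rip_set0.
move=> d [d0 rip_d]; apply: ge_inf; first by exists 0 => d' [].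
by split=> // x sx; apply: rip_d; apply: leq_trans sx ll'.
Qed.

Local Close Scope classical_set_scope.

Lemma rip_dot_disjoint l (a b : 'cV[R]_n) :
  [disjoint supp a & supp b] -> (#|supp a :|: supp b| <= l)%N ->
  dot (A *m a) (A *m b) <= rip_const A l * norm2 a * norm2 b.
Proof.
move=> dis card; set d := rip_const A l; have d0 : 0 <= d := rip_const_ge0 l.
have ab0 : dot a b = 0.
  apply: big1 => i _; have [ai|] := boolP (i \in supp a); last first.
    by rewrite inE negbK => /eqP->; rewrite mul0r.
  have : i \notin supp b by move: dis; rewrite disjoint_sym => /disjointFl ->.
  by rewrite inE negbK => /eqP->; rewrite mulr0.
have sparse_comb (c c' : R) : sparse l (c *: a + c' *: b).
  apply: leq_trans card; apply: subset_leq_card; apply/fintype.subsetP => i.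
  rewrite !inE !mxE; apply: contraNT; rewrite negb_or !negbK => /andP[/eqP-> /eqP->].
  by rewrite !mulr0 addr0.
have -> : d * norm2 a * norm2 b = (Num.sqrt d * norm2 a) * (Num.sqrt d * norm2 b).
  by rewrite mulrACA -expr2 sqr_sqrtr // mulrA.
apply: le_mul_of_scaled_bound; rewrite ?mulr_ge0 ?sqrtr_ge0 ?norm2_ge0 // => mu _.
(* Polarization: compare the RIP bounds for [mu a + b] and [mu a - b]. *)
have [_ upper] := rip_constP (sparse_comb mu 1).
have [lower _] := rip_constP (sparse_comb mu (-1)).
move: upper lower; rewrite -/d !exprMn !norm2_sq sqr_sqrtr // !mulmxDr -!scalemxAr.
rewrite !dot_lincomb2 ab0 sqrrN !expr1n; lra.
Qed.

Lemma norm2_mulmx_sparse_le l x : sparse l x ->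
  norm2 (A *m x) <= Num.sqrt (1 + rip_const A l) * norm2 x.
Proof.
move=> /rip_constP [_ upper].
have d0 : 0 <= 1 + rip_const A l by rewrite addr_ge0 ?rip_const_ge0.
by rewrite -ler_sqr ?nnegrE ?mulr_ge0 ?sqrtr_ge0 ?norm2_ge0 // exprMn (sqr_sqrtr d0).
Qed.

End RestrictedIsometry.

Section Largest.
Variables (R : realType) (n : nat).
Implicit Types v : 'cV[R]_n.

Lemma beats_irr v i : ~~ beats v i i.
Proof. by rewrite /beats ltxx ltnn andbF. Qed.

Lemma beats_trans v i j l : beats v l j -> beats v j i -> beats v l i.
Proof.
rewrite /beats => /orP[h1|/andP[/eqP e1 h1]] /orP[h2|/andP[/eqP e2 h2]].
- by rewrite (lt_trans h2 h1).
- by rewrite -e2 h1.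
- by rewrite e1 h2.
- by rewrite e1 e2 eqxx (ltn_trans h2 h1) orbT.
Qed.

Lemma beats_total v i j : i != j -> beats v i j || beats v j i.
Proof.
move=> nij; rewrite /beats.
case: (ltgtP `|v i 0| `|v j 0|) => //= _; rewrite ?orbT //.
by case: (ltngtP i j) => //= eij; move: nij; rewrite (val_inj eij) eqxx.
Qed.

Lemma card_largest k v : (#|largest k v| <= k)%N.
Proof.
(* [beats v] is a strict total order, so the number of indices beating [i] is
   injective in [i]; on [largest k v] it takes values below [k]. *)
pose rank i := #|[set j | beats v j i]|.
have rank_lt a b : beats v a b -> (rank a < rank b)%N.
  move=> ab; apply: proper_card; apply/properP; split.
    by apply/fintype.subsetP => c; rewrite !inE => ca; apply: beats_trans ca ab.
  by exists a; rewrite !inE ?beats_irr.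
have rank_inj : injective rank.
  move=> i j eq_ij; apply/eqP; apply/negP => /negP /(beats_total v).
  by case/orP => /rank_lt; rewrite eq_ij ltnn.
rewrite cardE -(size_map rank) -[X in (_ <= X)%N](size_iota 0 k).
apply: uniq_leq_size; first by rewrite map_inj_uniq // enum_uniq.
move=> r /mapP[i]; rewrite mem_enum inE => lt_ik ->.
(* [largest] is stated with a classical set comprehension. *)
rewrite mem_iota add0n /rank; move: lt_ik; congr (_ < _)%N.
by apply: eq_card => j; rewrite inE; apply/idP/idP => [/set_mem|/mem_set].
Qed.

End Largest.

Section Embedding.
Variables (R : realType) (n : nat) (S : {set 'I_n}).
Local Notation E := (@embedS R n S).
Local Notation f := (enum_val (A := S)).

Definition offS (v : 'cV[R]_n) : 'cV[R]_n := \col_i (if i \in S then 0 else v i 0).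

Lemma colsS_mulmx m (A : 'M[R]_(m, n)) : colsS S A = A *m E.
Proof.
apply/matrixP => i j; rewrite !mxE (bigD1 (f j)) //= big1 => [|l /negbTE nl].
  by rewrite !mxE eqxx mulr1 addr0.
by rewrite !mxE nl mulr0.
Qed.

Lemma trmx_embedS_mul : E^T *m E = 1%:M.
Proof.
apply/matrixP => j j'; rewrite !mxE (bigD1 (f j)) //= big1 => [|l /negbTE nl].
  by rewrite !mxE eqxx mul1r addr0 (inj_eq enum_val_inj).
by rewrite !mxE nl mul0r.
Qed.

Lemma embedS_notin (c : 'cV[R]_#|S|) i : i \notin S -> (E *m c) i 0 = 0.
Proof.
move=> iS; rewrite !mxE big1 // => j _; rewrite !mxE.
by case: eqP => [eij|]; [move: iS; rewrite eij enum_valP | rewrite mul0r].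
Qed.

Lemma embedS_enum_val (c : 'cV[R]_#|S|) j : (E *m c) (f j) 0 = c j 0.
Proof.
rewrite !mxE (bigD1 j) //= big1 => [|l /negbTE nl].
  by rewrite !mxE eqxx mul1r addr0.
by rewrite !mxE (inj_eq enum_val_inj) eq_sym nl mul0r.
Qed.

Lemma embedS_restr v i : (E *m restr S v) i 0 = if i \in S then v i 0 else 0.
Proof.
case: ifP => iS; last by rewrite embedS_notin ?iS.
by rewrite -(enum_rankK_in iS iS) embedS_enum_val mxE.
Qed.

Lemma norm2_embedS (w : 'cV[R]_#|S|) : norm2 (E *m w) = norm2 w.
Proof.
apply/eqP; rewrite -(@eqrXn2 _ 2) ?norm2_ge0 // !norm2_sq.
by rewrite dot_mulmx mulmxA trmx_embedS_mul mul1mx.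
Qed.

Lemma supp_embedS (w : 'cV[R]_#|S|) : supp (E *m w) \subset S.
Proof.
by apply/fintype.subsetP => i; rewrite inE; apply: contraNT => iS; rewrite embedS_notin.
Qed.

Lemma supp_offS v : supp (offS v) \subset supp v :\: S.
Proof.
apply/fintype.subsetP => i; rewrite !inE mxE.
by case: (i \in S); rewrite ?eqxx.
Qed.

Lemma embedS_subr_decomp (c : 'cV[R]_#|S|) v :
  E *m c - v = E *m restr S (E *m c - v) - offS v.
Proof.
apply/matrixP => i j; rewrite (ord1 j) [RHS]mxE embedS_restr.
case: ifP => iS; first by rewrite !mxE iS subr0.
by rewrite mxE embedS_notin ?iS // !mxE iS.
Qed.

End Embedding.

Section PseudoInverse.
Variables (R : realType) (p q : nat) (B : 'M[R]_(p, q)).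
Hypothesis B_inj : forall w : 'cV[R]_q, B *m w = 0 -> w = 0.

Lemma unitmx_gram : B^T *m B \in unitmx.
Proof.
rewrite unitmxE unitfE; apply/negP => /det0P[v v_neq0 vG].
have Bv0 : B *m v^T = 0.
  apply/eqP; rewrite -dot_self_eq0 dot_mulmx mulmxA.
  by rewrite -[B^T *m B]trmxK trmx_mul trmxK -trmx_mul vG trmx0 dotC dot0r.
by move: v_neq0; rewrite -(trmxK v) (B_inj Bv0) trmx0 eqxx.
Qed.

Definition penrose (P : 'M[R]_(q, p)) := [/\ B *m P *m B = B, P *m B *m P = P,
  (B *m P)^T = B *m P & (P *m B)^T = P *m B].

Lemma mp_pinvP : penrose (mp_pinv B).
Proof.
apply: (@xgetPex _ 0 [set P | penrose P]).
pose P := invmx (B^T *m B) *m B^T.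
have PB : P *m B = 1%:M by rewrite -mulmxA mulVmx ?unitmx_gram.
exists P; split.
- by rewrite -mulmxA PB mulmx1.
- by rewrite PB mul1mx.
- by rewrite !trmx_mul trmxK trmx_inv trmx_mul trmxK !mulmxA.
- by rewrite PB trmx1.
Qed.

Lemma mp_pinv_normal : B^T *m B *m mp_pinv B = B^T.
Proof.
have [BPB _ BP_sym _] := mp_pinvP.
by rewrite -mulmxA -BP_sym -trmx_mul BPB.
Qed.

End PseudoInverse.

Section LeastSquares.
Variables (R : realType) (m n k : nat) (A : 'M[R]_(m, n)) (S : {set 'I_n}).
Hypotheses (rip_k : rip_const A k < 1) (card_S : (#|S| <= k)%N).
Local Notation E := (@embedS R n S).

Lemma sparse_embedS (w : 'cV[R]_#|S|) : sparse k (E *m w).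
Proof. exact: leq_trans (subset_leq_card (supp_embedS w)) card_S. Qed.

Lemma colsS_inj (w : 'cV[R]_#|S|) : colsS S A *m w = 0 -> w = 0.
Proof.
rewrite colsS_mulmx -mulmxA => Aw0.
have [lower _] := rip_constP A (sparse_embedS w).
move: lower; rewrite Aw0 norm2_embedS => lower.
have : norm2 w ^+ 2 <= 0.
  rewrite -(@ler_pM2l _ (1 - rip_const A k)) ?subr_gt0 // mulr0.
  by apply: le_trans lower _; rewrite norm2_sq dot0r.
by rewrite norm2_sq => w0; apply/eqP; rewrite -dot_self_eq0 eq_le w0 dot_ge0.
Qed.

Lemma sea_x_residual_orth y : (colsS S A)^T *m (A *m sea_x A y S - y) = 0.
Proof.
rewrite /sea_x mulmxA -colsS_mulmx mulmxA mulmxBr !mulmxA.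
by rewrite mp_pinv_normal ?subrr //; exact: colsS_inj.
Qed.

Lemma sea_x_error_le (xs : 'cV[R]_n) (e : 'cV[R]_m) : (#|supp xs| <= k)%N ->
  (1 - rip_const A k) * norm2 (restr S (sea_x A (A *m xs + e) S - xs))
    <= rip_const A k.*2 * norm2 (offS S xs) + Num.sqrt (1 + rip_const A k) * norm2 e.
Proof.
move=> card_xs; set y := A *m xs + e.
set w := restr S _; set a := E *m w; set r := offS S xs.
have err : sea_x A y S - xs = a - r by apply: embedS_subr_decomp.
have orth : dot (A *m a) (A *m a) = dot (A *m a) (A *m r + e).
  apply/eqP; rewrite -subr_eq0 -dotBr.
  have -> : A *m a - (A *m r + e) = A *m sea_x A y S - y.
    by rewrite -[sea_x _ _ _](subrK xs) err /y mulmxDr mulmxBr !opprD !addrA addrK.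
  by rewrite {1}/a mulmxA -colsS_mulmx dotC dot_mulmx sea_x_residual_orth dotC dot0r.
have lower : (1 - rip_const A k) * norm2 w ^+ 2 <= norm2 (A *m a) ^+ 2.
  by have [] := rip_constP A (sparse_embedS w); rewrite norm2_embedS.
have cross : dot (A *m a) (A *m r) <= rip_const A k.*2 * norm2 w * norm2 r.
  rewrite -(norm2_embedS w); apply: rip_dot_disjoint.
    apply: (disjointW (supp_embedS w) (supp_offS S xs)); rewrite finset.disjoints_subset.
    by apply/fintype.subsetP => i iS; rewrite !inE iS.
  rewrite -addnn; apply: leq_trans (leq_card_setU _ _).1 (leq_add _ _).
    exact: sparse_embedS.
  apply: leq_trans card_xs; apply: subset_leq_card.
  exact: fintype.subset_trans (supp_offS S xs) (subsetDl _ _).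
have noise : dot (A *m a) e <= Num.sqrt (1 + rip_const A k) * norm2 w * norm2 e.
  apply: le_trans (ler_norm _) (le_trans (cauchy_schwarz _ _) _).
  rewrite ler_wpM2r ?norm2_ge0 // -(norm2_embedS w).
  exact: norm2_mulmx_sparse_le (sparse_embedS w).
apply: le_of_mul_sq_le (norm2_ge0 w) _ _.
  by rewrite addr_ge0 ?mulr_ge0 ?sqrtr_ge0 ?norm2_ge0 ?rip_const_ge0.
by apply: le_trans lower _; rewrite norm2_sq orth dotDr; lra.
Qed.

End LeastSquares.

Lemma oracle_offS (R : realType) m n (A : 'M[R]_(m, n)) y k eta X0 xs t :
  oracle A y k eta X0 xs t = - eta *: offS (sea_S A y k eta X0 t) xs.
Proof.
apply/matrixP => i j; rewrite !mxE inE.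
case: (i \in sea_S _ _ _ _ _ _); rewrite ?andbF ?andbT ?mulr0 //.
by case: eqP => [->|_]; rewrite ?mulr0 ?mulNr.
Qed.

Theorem lemmaC10 (R : realType) (m n k : nat) (A : 'M[R]_(m, n))
  (xs : 'cV[R]_n) (e : 'cV[R]_m) (X0 : 'cV[R]_n) (eta : R) (t : nat) :
  (0 < m)%N -> (0 < n)%N -> (0 < k)%N ->
  (k.*2.+1 <= n)%N -> rip_const A k.*2.+1 < 1 ->
  (#|supp xs| <= k)%N -> 0 < eta ->
  let y := A *m xs + e in
  let St := sea_S A y k eta X0 t in
  let xt := sea_xt A y k eta X0 t in
  let u := oracle A y k eta X0 xs t in
  norm2 (restr St (xt - xs))
    <= rip_const A k.*2 / (1 - rip_const A k) * (norm2 u / eta)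
       + Num.sqrt (1 + rip_const A k) / (1 - rip_const A k) * norm2 e.
Proof.
move=> _ _ _ _ rip_2k1 card_xs eta_gt0; cbv zeta.
have rip_k : rip_const A k < 1.
  by apply: le_lt_trans rip_2k1; apply/le_rip_const/leqW; rewrite -addnn leq_addr.
rewrite oracle_offS norm2Z normrN gtr0_norm // (mulrC eta) mulfK ?gt_eqF //.
rewrite !(mulrAC _ (1 - rip_const A k)^-1) -mulrDl ler_pdivlMr ?subr_gt0 // mulrC.
exact: (sea_x_error_le (S := sea_S _ _ _ _ _ t) rip_k (card_largest _ _) e card_xs).
Qed.
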